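(* Let $A$ be an infinite set of positive integers with $1\in A$. Then $\mathrm{Single}(n,A)$ and $\mathrm{Total}(n,A)$ are finite for all $n\ge1$ (and hence, for every $n$, every play of $\mathrm{AGG}(n,A)$ ends after finitely many steps) if and only if the differences between consecutive elements of $A$ (listed in increasing order) are unbounded.
   Context: For an integer $n\ge 0$ and a set $A$ of positive integers with $1\in A$, the abstract generalized 2048 game $\mathrm{AGG}(n,A)$ is played on $n$ indistinguishable cells. A position assigns to each cell either nothing (the cell is empty) or a tile carrying a value in $A$. The initial position has all cells empty. A step, which can be performed from any position having at least one empty cell, consists of: (i) placing a new tile of value $1$ into a chosen empty cell; then (ii) optionally choosing any collection of pairwise disjoint sets of nonempty cells such that the sum of the tile values in each chosen set belongs to $A$, and merging each chosen set into a single tile, whose value is that sum, placed in one cell of the set, the other cells of the set becoming empty. The game ends when, after a step, all cells are nonempty (no further step is then possible). A position is reachable if it can be obtained from the initial position by a finite sequence of steps; its total value is the sum of its tile values. For $n\ge1$, $\mathrm{Single}(n,A)$ is the supremum (possibly $\infty$) of the values $x\in A$ such that the position of $\mathrm{AGG}(n,A)$ with one tile of value $x$ and $n-1$ empty cells is reachable, and $\mathrm{Total}(n,A)$ is the supremum (possibly $\infty$) of the total values of reachable positions of $\mathrm{AGG}(n,A)$. *)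

From mathcomp Require Import all_boot.
Set Implicit Arguments. Unset Strict Implicit. Unset Printing Implicit Defensive.

Definition position (n : nat) := 'I_n -> option nat.

Definition tval (o : option nat) : nat := if o is Some v then v else 0.

Definition set_sum n (p : position n) (S : {set 'I_n}) : nat :=
  \sum_(i in S) tval (p i).

Definition total_value n (p : position n) : nat := \sum_(i < n) tval (p i).

Definition empty_position n : position n := fun _ => None.

Definition place n (p : position n) (c : 'I_n) : position n :=
  fun i => if i == c then Some 1 else p i.

(* (ii) optional merging: Ss is a collection of (set of cells, chosen target cell);
   the sets consist of nonempty cells, are pairwise disjoint, have sum in A;
   each set is merged into its chosen cell, the other cells of the set become empty;
   cells not in any chosen set are unchanged.  Ss = [::] means no merge. *)
Definition merge_step (A : nat -> Prop) n (p q : position n) : Prop :=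
  exists Ss : seq ({set 'I_n} * 'I_n),
    (forall Sr, Sr \in Ss ->
       [/\ Sr.2 \in Sr.1, (forall i, i \in Sr.1 -> p i <> None) & A (set_sum p Sr.1)]) /\
    (forall Sr Tr, Sr \in Ss -> Tr \in Ss -> Sr != Tr -> [disjoint Sr.1 & Tr.1]) /\
    (forall i : 'I_n,
       ((forall Sr, Sr \in Ss -> i \notin Sr.1) -> q i = p i) /\
       (forall Sr, Sr \in Ss -> i \in Sr.1 ->
          q i = if i == Sr.2 then Some (set_sum p Sr.1) else None)).

Definition agg_step (A : nat -> Prop) n (p q : position n) : Prop :=
  exists c : 'I_n, p c = None /\ merge_step A (place p c) q.

Inductive reachable (A : nat -> Prop) (n : nat) : position n -> Prop :=
  | reach_init : reachable A (@empty_position n)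
  | reach_step (p q : position n) : reachable A p -> agg_step A p q -> reachable A q.

Definition single_finite (A : nat -> Prop) n : Prop :=
  exists B : nat, forall (x : nat) (p : position n),
    A x -> reachable A p ->
    (exists i : 'I_n, p i = Some x /\ forall j, j != i -> p j = None) ->
    x <= B.

Definition total_finite (A : nat -> Prop) n : Prop :=
  exists B : nat, forall p : position n, reachable A p -> total_value p <= B.

Definition gaps_unbounded (A : nat -> Prop) : Prop :=
  forall M : nat, exists a b : nat,
    [/\ A a, A b, a < b, (forall c, a < c < b -> ~ A c) & M <= b - a].

(* Positions are abstracted to multisets of tile values.  If the gaps of [A]
   are unbounded, bound the total value by induction on the number of cells:
   given a bound [C] with [k] cells, take a gap [(a, b)] of [A] longer than [C].
   With [k + 1] cells one tile can be tracked through all merges while the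
   other tiles always form a position reachable with [k] cells, so every tile
   is at most [a + C], hence at most [a] since it lies in [A].  Conversely, if
   all gaps are smaller than [M], every [x] in [A] is reachable as a single
   tile with [M + 1] cells: starting from the single tile [a] preceding [x] in
   [A], place [x - a] ones and merge everything into one tile. *)

From Pilot Require Import Defs.
From mathcomp Require Import all_boot zify.
From Stdlib Require Import Classical FunctionalExtensionality.
Set Implicit Arguments. Unset Strict Implicit. Unset Printing Implicit Defensive.

Lemma perm_swap12 (T : eqType) (a b : T) s : perm_eq (a :: b :: s) (b :: a :: s).
Proof. exact/permPl/(perm_catCA [:: a] [:: b] s). Qed.

Lemma perm_rem_cons (T : eqType) (s t : seq T) x rest :
  x \in s -> perm_eq (x :: rest) (s ++ t) -> perm_eq rest (rem x s ++ t).
Proof.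
move=> xs xr; rewrite -(perm_cons x) (perm_trans xr) //.
by rewrite -cat_cons perm_cat2r perm_to_rem.
Qed.

Lemma mem_leq_sumn (s : seq nat) x : x \in s -> x <= sumn s.
Proof. by move=> xs; rewrite (perm_sumn (perm_to_rem xs)) leq_addr. Qed.

Lemma sumn_leq_size_mul (s : seq nat) a :
  (forall x, x \in s -> x <= a) -> sumn s <= size s * a.
Proof.
elim: s => //= y s IH le_sa; rewrite mulSn leq_add ?le_sa ?mem_head // IH // => x xs.
by rewrite le_sa // inE xs orbT.
Qed.

Section Merges.
Variable A : nat -> Prop.

Definition merge1 (s t : seq nat) : Prop :=
  exists g rest, [/\ perm_eq s (g ++ rest), 0 < size g, A (sumn g)
                   & perm_eq t (sumn g :: rest)].

Inductive merges : seq nat -> seq nat -> Prop :=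
| merges_perm s t : perm_eq s t -> merges s t
| merges_cons s u t : merge1 s u -> merges u t -> merges s t.

Lemma merges_perml s s' t : perm_eq s s' -> merges s t -> merges s' t.
Proof.
rewrite perm_sym => s's st.
case: st s's => [{}s {}t st | {}s u {}t [g [rest [sg g0 Ag ug]]] ut] s's.
  exact/merges_perm/(perm_trans s's st).
by apply: merges_cons ut; exists g, rest; split=> //; apply: perm_trans s's sg.
Qed.

Lemma merges_trans s u t : merges s u -> merges u t -> merges s t.
Proof.
elim=> [{}s {}u su | {}s v {}u sv _ IH] ut; last exact: merges_cons sv (IH ut).
by apply: merges_perml ut; rewrite perm_sym.
Qed.

Lemma merge1_merges s t : merge1 s t -> merges s t.
Proof. by move=> st; apply: merges_cons st (merges_perm (perm_refl t)). Qed.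

Lemma merges_sumn s t : merges s t -> sumn s = sumn t.
Proof.
elim=> [{}s {}t st | {}s u {}t [g [rest [sg _ _ ug]]] _ <-]; first exact: perm_sumn.
by rewrite (perm_sumn sg) (perm_sumn ug) sumn_cat.
Qed.

Lemma merges_size s t : merges s t -> size t <= size s.
Proof.
elim=> [{}s {}t st | {}s u {}t [g [rest [sg g0 _ ug]]] _ IH].
  by rewrite (perm_size st).
apply: leq_trans IH _; rewrite (perm_size sg) (perm_size ug) size_cat /=.
by rewrite -add1n leq_add2r.
Qed.

Lemma merges_nil t : merges [::] t -> t = [::].
Proof. by move/merges_size; case: t. Qed.

Lemma merges_all_A s t :
  (forall x, x \in s -> A x) -> merges s t -> forall x, x \in t -> A x.
Proof.
move=> As st; elim: st As => [{}s {}t st | {}s u {}t [g [rest [sg _ Ag ug]]] _ IH] As.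
  by move=> x; rewrite -(perm_mem st); apply: As.
apply: IH => x; rewrite (perm_mem ug) inE => /predU1P[-> //|xr].
by apply: As; rewrite (perm_mem sg) mem_cat xr orbT.
Qed.

Lemma merges_split x s u v : merges x s -> perm_eq s (u ++ v) ->
  exists x1 x2, [/\ perm_eq x (x1 ++ x2), merges x1 u & merges x2 v].
Proof.
move=> xs; elim: xs u v => [{}x {}s xs | {}x y {}s [g [rest [xg g0 Ag yg]]] _ IH] u v suv.
  by exists u, v; split; [exact: perm_trans xs suv | exact: merges_perm | exact: merges_perm].
have [y1 [y2 [yy y1u y2v]]] := IH _ _ suv.
rewrite perm_sym in yg.
have left_case y1' y2' u' v' : perm_eq y (y1' ++ y2') -> merges y1' u' -> merges y2' v' ->
    sumn g \in y1' -> exists x1 x2, [/\ perm_eq x (x1 ++ x2), merges x1 u' & merges x2 v'].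
  move=> yy' y1u' y2v' gy1; have rest_eq := perm_rem_cons gy1 (perm_trans yg yy').
  exists (g ++ rem (sumn g) y1'), y2'; split=> //.
    by rewrite -catA (perm_trans xg) // perm_cat2l.
  apply: merges_cons y1u'; exists g, (rem (sumn g) y1'); split=> //.
  exact: perm_to_rem.
have : sumn g \in y1 ++ y2 by rewrite -(perm_mem yy) -(perm_mem yg) mem_head.
rewrite mem_cat => /orP[gy1 | gy2]; first exact: left_case y1u y2v gy1.
have yy21 : perm_eq y (y2 ++ y1) by rewrite (perm_trans yy) // perm_catC.
have [x2 [x1 [xx x2v x1u]]] := left_case _ _ _ _ yy21 y2v y1u gy2.
by exists x1, x2; split=> //; rewrite (perm_trans xx) // perm_catC.
Qed.

(* Follow the tile [m] through a sequence of merges: it ends up inside a tile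
   [m + sumn u], where [u] are tiles of [w] absorbed on the way, while the
   remaining tiles [w2] of [w] are merged among themselves. *)
Lemma merges_track x q m w : merges x q -> perm_eq x (m :: w) ->
  exists u w2 z, [/\ perm_eq q ((m + sumn u) :: z), perm_eq w (u ++ w2) & merges w2 z].
Proof.
move=> xq; elim: xq m w => [{}x {}q xq | {}x y {}q [g [rest [xg g0 Ag yg]]] _ IH] m w xmw.
  exists [::], w, w; split; [|by []|exact: merges_perm].
  by rewrite addn0 perm_sym (perm_trans _ xq) // perm_sym.
rewrite perm_sym in xmw; have mg_rest := perm_trans xmw xg.
have : m \in g ++ rest by rewrite -(perm_mem mg_rest) mem_head.
rewrite mem_cat => /orP[mg | mrest].
  have w_eq : perm_eq w (rem m g ++ rest) by apply: perm_rem_cons mg_rest.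
  have [u [w2 [z [qz ru w2z]]]] := IH _ _ yg.
  exists (rem m g ++ u), w2, z; split=> //.
    by rewrite sumn_cat addnA -[m + _]/(sumn (m :: _)) -(perm_sumn (perm_to_rem mg)).
  by rewrite (perm_trans w_eq) // -catA perm_cat2l.
have w_eq : perm_eq w (g ++ rem m rest).
  rewrite perm_sym perm_catC perm_sym; apply: perm_rem_cons mrest _.
  by rewrite (perm_trans mg_rest) // perm_catC.
have y_eq : perm_eq y (m :: sumn g :: rem m rest).
  rewrite (perm_trans yg) //; apply: perm_trans _ (perm_swap12 _ _ _).
  by rewrite perm_cons perm_to_rem.
have [u [w2 [z [qz uw2 w2z]]]] := IH _ _ y_eq.
have merge_g : merges (g ++ rem m rest) (sumn g :: rem m rest).
  by apply: merge1_merges; exists g, (rem m rest).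
have [x1 [x2 [xx x1u x2w2]]] := merges_split merge_g uw2.
exists x1, x2, z; split; last exact: merges_trans x2w2 w2z.
  by rewrite (merges_sumn x1u).
exact: perm_trans w_eq xx.
Qed.

(* Multisets of tile values reachable with at most [k] cells, up to permutation. *)
Inductive msreach (k : nat) : seq nat -> Prop :=
| msreach_nil : msreach k [::]
| msreach_step s t : msreach k s -> size s < k -> merges (1 :: s) t -> msreach k t.

Lemma msreach_merges k s t : msreach k s -> merges s t -> msreach k t.
Proof.
case=> [|p {}s ps p_k ps'] st; first by rewrite (merges_nil st); constructor.
exact: msreach_step ps p_k (merges_trans ps' st).
Qed.

Lemma msreach_size k s : msreach k s -> size s <= k.
Proof. by elim=> // p t _ _ p_k pt; apply: leq_trans (merges_size pt) _. Qed.

Lemma msreach_catr k s u v : msreach k s -> perm_eq s (u ++ v) -> msreach k v.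
Proof.
move=> ks; elim: ks u v => [|p t _ IH p_k pt] u v tuv.
  by move: tuv; rewrite perm_sym => /perm_nilP; case: u => [|//]; case: v => // _; constructor.
have [x1 [x2 [px x1u x2v]]] := merges_split pt tuv.
have : 1 \in x1 ++ x2 by rewrite -(perm_mem px) mem_head.
rewrite mem_cat => /orP[one_x1 | one_x2].
  exact: msreach_merges (IH _ _ (perm_rem_cons one_x1 px)) x2v.
have p_eq : perm_eq p (x1 ++ rem 1 x2).
  rewrite perm_sym perm_catC perm_sym; apply: perm_rem_cons one_x2 _.
  by rewrite (perm_trans px) // perm_catC.
apply: msreach_step (IH _ _ p_eq) _ _.
  by apply: leq_ltn_trans p_k; rewrite (perm_size p_eq) size_cat leq_addl.
exact: merges_perml (perm_to_rem one_x2) x2v.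
Qed.

Hypothesis A1 : A 1.

Lemma msreach_all_A k s : msreach k s -> forall x, x \in s -> A x.
Proof.
elim=> // p t _ IH _; apply: merges_all_A => x.
by rewrite inE => /predU1P[-> | /IH].
Qed.

Lemma merges_peel k s t m rest : perm_eq s (m :: rest) -> msreach k rest -> merges s t ->
  exists u z, [/\ perm_eq t ((m + sumn u) :: z), sumn u <= sumn rest & msreach k z].
Proof.
move=> s_eq krest st; have [u [w2 [z [tz rest_eq w2z]]]] := merges_track st s_eq.
exists u, z; split=> //.
  by rewrite (perm_sumn rest_eq) sumn_cat leq_addr.
exact: msreach_merges (msreach_catr krest rest_eq) w2z.
Qed.

Lemma msreach_peel_cons1 k p : size p < k.+1 ->
  (p <> [::] -> exists m rest, perm_eq p (m :: rest) /\ msreach k rest) ->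
  exists m rest, perm_eq (1 :: p) (m :: rest) /\ msreach k rest.
Proof.
case: p => [|x p] p_k peel_p; first by exists 1, [::]; split=> //; constructor.
have [m [rest [p_eq krest]]] : exists m rest, perm_eq (x :: p) (m :: rest) /\ msreach k rest.
  exact: peel_p.
exists m, (1 :: rest); split.
  by rewrite (perm_trans _ (perm_swap12 _ _ _)) // perm_cons.
apply: msreach_step krest _ (merges_perm (perm_refl _)).
by move: p_k; rewrite (perm_size p_eq).
Qed.

Lemma msreach_peel k q : msreach k.+1 q -> q <> [::] ->
  exists m rest, perm_eq q (m :: rest) /\ msreach k rest.
Proof.
elim=> // p t _ IH p_k pt _.
have [m [rest [p_eq krest]]] := msreach_peel_cons1 p_k IH.
have [u [z [tz _ kz]]] := merges_peel p_eq krest pt.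
by exists (m + sumn u), z.
Qed.

End Merges.

Section GapBound.
Variable A : nat -> Prop.
Hypothesis A1 : A 1.

Lemma gap_leq_left a b C : (forall c, a < c < b -> ~ A c) -> C < b - a ->
  forall y, A y -> y <= a + C -> y <= a.
Proof.
move=> gap Cba y Ay yaC; rewrite leqNgt; apply/negP => ay.
by apply: (gap y _ Ay); rewrite ay /=; lia.
Qed.

Lemma msreachS_leq_gap k C a : 0 < a ->
  (forall q, msreach A k q -> sumn q <= C) ->
  (forall y, A y -> y <= a + C -> y <= a) ->
  forall q, msreach A k.+1 q -> forall y, y \in q -> y <= a.
Proof.
move=> a_gt0 sumC gapA q; elim=> [|p t kp IH p_k pt] y yt //.
have [m [rest [p_eq krest]]] := msreach_peel_cons1 p_k (msreach_peel kp).
have [u [z [tz su kz]]] := merges_peel p_eq krest pt.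
apply: gapA (msreach_all_A A1 (msreach_step kp p_k pt) yt) _.
move: yt; rewrite (perm_mem tz) inE => /predU1P[-> | yz].
  have ma : m <= a.
    have : m \in 1 :: p by rewrite (perm_mem p_eq) mem_head.
    by rewrite inE => /predU1P[-> | /IH].
  exact: leq_add ma (leq_trans su (sumC _ krest)).
exact: leq_trans (mem_leq_sumn yz) (leq_trans (sumC _ kz) (leq_addl a C)).
Qed.

Hypothesis Apos : forall a, A a -> 0 < a.

Lemma msreach_sumn_bounded : gaps_unbounded A ->
  forall k, exists C, forall q, msreach A k q -> sumn q <= C.
Proof.
move=> gapsA; elim=> [|k [C sumC]].
  by exists 0 => q /msreach_size; case: q.
have [a [b [Aa Ab ab gap Cb]]] := gapsA C.+1.
have le_a := msreachS_leq_gap (Apos Aa) sumC (gap_leq_left gap Cb).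
exists (k.+1 * a) => q kq; apply: leq_trans (sumn_leq_size_mul (le_a _ kq)) _.
by rewrite leq_mul2r (msreach_size kq) orbT.
Qed.

End GapBound.

Definition tiles n (p : position n) : seq nat := pmap p (index_enum 'I_n).

Lemma sum_tval_pmap n (p : position n) s : \sum_(i <- s) Defs.tval (p i) = sumn (pmap p s).
Proof. by rewrite sumnE big_pmap. Qed.

Lemma total_value_tiles n (p : position n) : total_value p = sumn (tiles p).
Proof. exact: sum_tval_pmap. Qed.

Lemma size_tiles n (p : position n) : size (tiles p) <= n.
Proof.
rewrite size_pmap (leq_trans (count_size _ _)) //.
by rewrite /index_enum unlock -enumT -cardT card_ord.
Qed.

Lemma perm_pmap_filterC (T : eqType) (f : T -> option nat) (a : pred T) s :
  perm_eq (pmap f s) (pmap f (filter a s) ++ pmap f (filter (predC a) s)).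
Proof. by rewrite -pmap_cat; apply: perm_pmap; rewrite perm_sym perm_filterC. Qed.

Lemma place_tiles n (p : position n) c : p c = None ->
  perm_eq (tiles (place p c)) (1 :: tiles p).
Proof.
move=> pc; rewrite /tiles.
have only_c := filter_pred1_uniq (index_enum_uniq 'I_n) (mem_index_enum c).
have off_c : pmap (place p c) [seq i <- index_enum 'I_n | predC (pred1 c) i] =
             pmap p [seq i <- index_enum 'I_n | predC (pred1 c) i].
  by apply: eq_in_pmap => i; rewrite mem_filter /= /place => /andP[/negbTE-> _].
rewrite (perm_trans (perm_pmap_filterC _ (pred1 c) _)) // only_c off_c /= /place eqxx.
by rewrite perm_cons perm_sym (perm_trans (perm_pmap_filterC _ (pred1 c) _)) // only_c /= pc.
Qed.

Lemma pmap_pred1 (T : eqType) (r : T) (v : nat) s :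
  pmap (fun i => if i == r then Some v else None) s = nseq (count_mem r s) v.
Proof. by elim: s => //= x s ->; rewrite eq_sym; case: eqP. Qed.

Lemma set_sum_pmap n (p : position n) (S : {set 'I_n}) :
  set_sum p S = sumn (pmap p [seq i <- index_enum 'I_n | i \in S]).
Proof. by rewrite /set_sum -sum_tval_pmap big_filter. Qed.

Lemma merge1_group A n (p p' : position n) (S : {set 'I_n}) r :
  r \in S -> (forall i, i \in S -> p i <> None) -> A (set_sum p S) ->
  (forall i, p' i = if i \in S then (if i == r then Some (set_sum p S) else None) else p i) ->
  merge1 A (tiles p) (tiles p').
Proof.
move=> rS nonempty AS p'E; rewrite set_sum_pmap in AS p'E.
set inS := [seq i <- index_enum 'I_n | i \in S] in AS p'E *.
set g := pmap p inS in AS p'E *.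
exists g, (pmap p [seq i <- index_enum 'I_n | predC (mem S) i]); split=> //.
- exact: perm_pmap_filterC.
- have := nonempty r rS; case pr: (p r) => [v|//] _.
  have : v \in g by rewrite mem_pmap -pr map_f // mem_filter rS mem_index_enum.
  by case: (g).
rewrite (perm_trans (perm_pmap_filterC _ (mem S) _)) //.
have -> : pmap p' inS = [:: sumn g].
  have rinS : r \in inS by rewrite mem_filter rS mem_index_enum.
  rewrite (eq_in_pmap (f2 := fun i => if i == r then Some (sumn g) else None)).
    by rewrite pmap_pred1 count_uniq_mem ?rinS // filter_uniq ?index_enum_uniq.
  by move=> i; rewrite mem_filter => /andP[iS _]; rewrite p'E iS.
rewrite /= perm_cons (@eq_in_pmap _ _ p' p) // => i.
by rewrite mem_filter /= => /andP[iS _]; rewrite p'E (negbTE iS).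
Qed.

Section MergeGroups.
Variables (A : nat -> Prop) (n : nat) (p : position n).
Local Notation groups := (seq ({set 'I_n} * 'I_n)).

Definition merge_groups (Ss : groups) : position n :=
  foldr (fun (Sr : {set 'I_n} * 'I_n) (q : position n) i =>
           if i \in Sr.1 then (if i == Sr.2 then Some (set_sum p Sr.1) else None) else q i)
        p Ss.

Definition groups_disjoint (Ss : groups) : Prop :=
  forall Sr Tr, Sr \in Ss -> Tr \in Ss -> Sr != Tr -> [disjoint Sr.1 & Tr.1].

Definition groups_mergeable (Ss : groups) : Prop :=
  forall Sr, Sr \in Ss ->
    [/\ Sr.2 \in Sr.1, (forall i, i \in Sr.1 -> p i <> None) & A (set_sum p Sr.1)].

Lemma merge_groups_out (Ss : groups) (i : 'I_n) :
  (forall Sr, Sr \in Ss -> i \notin Sr.1) -> merge_groups Ss i = p i.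
Proof.
elim: Ss => //= Sr Ss IH notin; rewrite (negbTE (notin _ (mem_head _ _))) IH // => Tr TrSs.
by apply: notin; rewrite inE TrSs orbT.
Qed.

Lemma merge_groups_in (Ss : groups) (i : 'I_n) Sr : groups_disjoint Ss -> Sr \in Ss -> i \in Sr.1 ->
  merge_groups Ss i = if i == Sr.2 then Some (set_sum p Sr.1) else None.
Proof.
elim: Ss => //= Tr Ss IH disj; rewrite inE => /predU1P[-> -> // | SrSs iS].
case: ifP => iT.
  case: (eqVneq Sr Tr) => [-> // | SrTr].
  have := disj Sr Tr; rewrite mem_head inE SrSs orbT => /(_ isT isT SrTr).
  by rewrite disjoint_sym => /disjointFr/(_ iT); rewrite iS.
by apply: IH => // S T S_in T_in; apply: disj; rewrite inE ?S_in ?T_in orbT.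
Qed.

Lemma merges_merge_groups (Ss : groups) : uniq Ss -> groups_mergeable Ss -> groups_disjoint Ss ->
  merges A (tiles p) (tiles (merge_groups Ss)).
Proof.
elim: Ss => [|Sr Ss IH] /=; first by move=> *; apply/merges_perm.
move=> /andP[SrSs uSs] mergeable disj.
have mergeable' : groups_mergeable Ss.
  by move=> T TSs; apply: mergeable; rewrite inE TSs orbT.
have disj' : groups_disjoint Ss.
  by move=> S T S_in T_in; apply: disj; rewrite inE ?S_in ?T_in orbT.
apply: merges_trans (IH uSs mergeable' disj') _.
have untouched i : i \in Sr.1 -> merge_groups Ss i = p i.
  move=> iS; apply: merge_groups_out => T TSs; apply/negP => iT.
  have SrT : Sr != T by apply: contraNneq SrSs => ->.
  have := disj Sr T (mem_head _ _); rewrite inE TSs orbT => /(_ isT SrT).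
  by move/disjointFr/(_ iS); rewrite iT.
have same_sum : set_sum (merge_groups Ss) Sr.1 = set_sum p Sr.1.
  by apply: eq_bigr => i iS; rewrite untouched.
have [rS nonempty AS] := mergeable _ (mem_head _ _).
apply/merge1_merges/(merge1_group rS); rewrite ?same_sum //.
by move=> i iS; rewrite untouched //; apply: nonempty.
Qed.

End MergeGroups.

Lemma merge_step_merges A n (p q : position n) :
  merge_step A p q -> merges A (tiles p) (tiles q).
Proof.
move=> [Ss [mergeable [disj qE]]].
have mergeable' : groups_mergeable A p (undup Ss).
  by move=> Sr; rewrite mem_undup; apply: mergeable.
have disj' : groups_disjoint (undup Ss) by move=> Sr Tr; rewrite !mem_undup; apply: disj.
have -> : tiles q = tiles (merge_groups p (undup Ss)).
  apply: eq_pmap => i; have [q_out q_in] := qE i.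
  have [/hasP[Sr SrSs iS] | /hasPn notin] :=
    boolP (has (fun Sr : {set 'I_n} * 'I_n => i \in Sr.1) Ss).
    by rewrite (q_in _ SrSs iS) (@merge_groups_in _ p _ _ Sr disj') ?mem_undup.
  by rewrite q_out // merge_groups_out // => Sr; rewrite mem_undup; apply: notin.
exact: merges_merge_groups (undup_uniq _) mergeable' disj'.
Qed.

Lemma reachable_msreach A n (p : position n) : reachable A p -> msreach A n (tiles p).
Proof.
elim=> [|p0 q _ IH [c [pc pq]]].
  have -> : tiles (@empty_position n) = [::] by rewrite /tiles; elim: (index_enum _).
  exact: msreach_nil.
have placed := place_tiles pc.
apply: msreach_step IH _ (merges_perml placed (merge_step_merges pq)).
by have := size_tiles (place p0 c); rewrite (perm_size placed).
Qed.

Lemma total_value_single n (p : position n) i x :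
  p i = Some x -> (forall j, j != i -> p j = None) -> total_value p = x.
Proof.
move=> pi others; rewrite /total_value (bigD1 i) //= pi big1 ?addn0 // => j /others -> //.
Qed.

Lemma single_finite_of_total A n : total_finite A n -> single_finite A n.
Proof.
move=> [B total_le]; exists B => x p _ reach_p [i [pi others]].
by rewrite -(total_value_single pi others); apply: total_le.
Qed.

Lemma total_finite_of_gaps_unbounded A n : (forall a, A a -> 0 < a) -> A 1 ->
  gaps_unbounded A -> total_finite A n.
Proof.
move=> Apos A1 gapsA; have [C sumC] := msreach_sumn_bounded A1 Apos gapsA n.
by exists C => p /reachable_msreach; rewrite total_value_tiles; apply: sumC.
Qed.

Lemma total_place n (p : position n) c : p c = None ->
  total_value (place p c) = (total_value p).+1.
Proof.
move=> pc; rewrite /total_value (bigD1 c) // [in RHS](bigD1 c) //= /place eqxx pc /=.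
by congr _.+1; apply: eq_bigr => i /negbTE ->.
Qed.

Lemma merge_step_refl A n (p : position n) : merge_step A p p.
Proof. by exists [::]; split=> [//|]; split=> [//|i]; split. Qed.

Lemma reachable_place A n (p : position n) c :
  reachable A p -> p c = None -> reachable A (place p c).
Proof.
by move=> reach_p pc; apply: reach_step reach_p _; exists c; split=> //; apply: merge_step_refl.
Qed.

Definition tile_ones M a k : position M.+1 :=
  fun i => if val i == 0 then Some a else if val i <= k then Some 1 else None.
Arguments tile_ones : clear implicits.

Lemma tile_ones_place M a k (lt_kM : k.+1 < M.+1) :
  tile_ones M a k (Ordinal lt_kM) = None /\
  place (tile_ones M a k) (Ordinal lt_kM) = tile_ones M a k.+1.
Proof.
split; first by rewrite /tile_ones /= ltnn.
apply: functional_extensionality => i; rewrite /tile_ones /place -val_eqE /=.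
by case: (val i) => [|j] //=; rewrite eqSS ltnS; case: ltngtP.
Qed.

Lemma total_value_tile_ones M a k : k < M.+1 -> total_value (tile_ones M a k) = a + k.
Proof.
elim: k => [|k IH] lt_kM.
  rewrite addn0; apply: (total_value_single (i := ord0)) => // j.
  by rewrite -val_eqE /tile_ones; case: (val j).
have [free <-] := tile_ones_place a lt_kM.
by rewrite total_place // IH ?addnS // ltnW.
Qed.

Lemma reachable_tile_ones A M a k : reachable A (tile_ones M a 0) -> k < M.+1 ->
  reachable A (tile_ones M a k).
Proof.
move=> reach0; elim: k => // k IH lt_kM.
have [free <-] := tile_ones_place a lt_kM.
exact: reachable_place (IH (ltnW lt_kM)) free.
Qed.

Lemma reachable_tile_ones_merge A M a k : A (a + k.+1) -> k.+1 < M.+1 ->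
  reachable A (tile_ones M a k) -> reachable A (tile_ones M (a + k.+1) 0).
Proof.
move=> Asum lt_kM reach_k; have [free placed] := tile_ones_place a lt_kM.
apply: reach_step reach_k _; exists (Ordinal lt_kM); split=> //; rewrite placed.
set S := [set i : 'I_M.+1 | val i <= k.+1].
have sumS : set_sum (tile_ones M a k.+1) S = a + k.+1.
  rewrite -(total_value_tile_ones a lt_kM) /set_sum /total_value big_mkcond.
  apply: eq_bigr => i _; rewrite inE /tile_ones.
  by case: (val i) => [|j] //=; case: ifP => [-> | _].
exists [:: (S, ord0)]; split.
  move=> Sr; rewrite inE => /eqP-> /=; split; rewrite ?inE ?sumS //.
  by move=> i; rewrite inE /tile_ones => ->; case: ifP.
split; first by move=> Sr Tr; rewrite !inE => /eqP-> /eqP->; rewrite eqxx.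
move=> i; split.
  move=> /(_ _ (mem_head _ _)); rewrite inE => /negbTE out_i.
  by rewrite /tile_ones out_i; case: (val i) out_i.
move=> Sr; rewrite inE => /eqP-> /= _.
by rewrite sumS /tile_ones -val_eqE; case: (val i).
Qed.

Section BoundedGaps.
Variables (A : nat -> Prop) (M : nat).
Hypotheses (Apos : forall a, A a -> 0 < a) (A1 : A 1).
Hypothesis gapsM :
  forall a b, A a -> A b -> a < b -> (forall c, a < c < b -> ~ A c) -> b - a < M.

Lemma exists_prev_elem x : 1 < x ->
  exists a, [/\ A a, a < x & forall c, a < c < x -> ~ A c].
Proof.
elim: x => // x IH lt_1x; have [-> | lt1x] : x = 1 \/ 1 < x by lia.
  by exists 1; split=> // c; lia.
have [Ax | notAx] := classic (A x).
  by exists x; split=> // c; lia.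
have [a [Aa lt_ax gap]] := IH lt1x.
exists a; split=> [//||c /andP[lt_ac lt_cx1]]; first lia.
have [-> // | lt_cx] : c = x \/ c < x by lia.
by apply: gap; rewrite lt_ac.
Qed.

Lemma reachable_single x : A x -> reachable A (tile_ones M x 0).
Proof.
elim/ltn_ind: x => x IH Ax; have [-> | lt_1x] : x = 1 \/ 1 < x by have := Apos Ax; lia.
  have -> : tile_ones M 1 0 = place (@empty_position M.+1) ord0.
    apply: functional_extensionality => i.
    by rewrite /tile_ones /place -val_eqE /=; case: (val i).
  exact: reachable_place (reach_init A M.+1) _.
have [a [Aa lt_ax gap]] := exists_prev_elem lt_1x.
have lt_xaM := gapsM Aa Ax lt_ax gap.
have x_eq : x = a + (x - a).-1.+1 by lia.
rewrite x_eq in Ax *; apply: reachable_tile_ones_merge Ax _ _; first lia.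
by apply: reachable_tile_ones (IH _ lt_ax Aa) _; lia.
Qed.

End BoundedGaps.

Lemma not_gaps_unbounded A : ~ gaps_unbounded A -> exists M, forall a b,
  A a -> A b -> a < b -> (forall c, a < c < b -> ~ A c) -> b - a < M.
Proof.
move=> /not_all_ex_not[M no_gap]; exists M => a b Aa Ab lt_ab gap.
by rewrite ltnNge; apply/negP => le_M; apply: no_gap; exists a, b.
Qed.

Theorem mainTheorem8 (A : nat -> Prop)
  (Apos : forall a, A a -> 0 < a) (A1 : A 1)
  (Ainf : forall m, exists a, A a /\ m < a) :
  (forall n, 1 <= n -> single_finite A n /\ total_finite A n) <-> gaps_unbounded A.
Proof.
split=> [finite | gapsA n _]; last first.
  have total := total_finite_of_gaps_unbounded n Apos A1 gapsA.
  by split=> //; apply: single_finite_of_total.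
apply: NNPP => /not_gaps_unbounded[M gapsM].
have [_ [B total_le]] := finite M.+1 isT.
have [x [Ax lt_Bx]] := Ainf B.
have := total_le _ (reachable_single Apos A1 gapsM Ax).
by rewrite total_value_tile_ones // addn0 leqNgt lt_Bx.
Qed.
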